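(* Let $G$ be a finite additive group of order $v$ and let $\mathcal{F}=\{B_1,B_2,\{0\}\}$ be a $(v,[k_1,k_2,1],\lambda)$ partitioned difference family in $G$ (with $|B_1|=k_1$, $|B_2|=k_2$). Then for $i=1,2$: (i) if $v-\lambda$ is odd, $B_i$ is a $\left(v,\frac{v-1}{2},\frac{v-3}{4}\right)$ difference set in $G$; (ii) if $v-\lambda$ is even, $B_i$ is a $(G,k_i,\alpha_i,\alpha_i+1)$ partial difference set with $\alpha_i=k_i+\frac{\lambda-v}{2}$.
   Context: Difference in $G$: $x-y:=x+(-y)$. For $B\subseteq G$, $\Delta B$ is the multiset $\{x-y: x,y\in B, x\neq y\}$; for $\mathcal{F}=\{B_1,\dots,B_t\}$, $\Delta\mathcal{F}$ is the multiset union of the $\Delta B_i$. A $(v,[k_1,\dots,k_t],\lambda)$ partitioned difference family in $G$ is a collection of subsets $B_1,\dots,B_t$ partitioning $G$ with $|B_i|=k_i$ such that $\Delta\mathcal{F}$ contains every non-zero element of $G$ exactly $\lambda$ times. A $k$-subset $B$ is a $(v,k,\mu)$ difference set if $\Delta B$ contains every non-zero element of $G$ exactly $\mu$ times. A $k$-subset $B$ of $G$ is a $(G,k,\alpha,\beta)$ (or $(v,k,\alpha,\beta)$) partial difference set if $\Delta B$ contains every non-zero element of $B$ exactly $\alpha$ times and every non-zero element of $G\setminus B$ exactly $\beta$ times. *)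

From HB Require Import structures.
From mathcomp Require Import all_boot all_order all_algebra.
Set Implicit Arguments. Unset Strict Implicit. Unset Printing Implicit Defensive.
Import Order.TTheory GRing.Theory Num.Theory.
Local Open Scope ring_scope.

Definition dcount (G : finZmodType) (B : {set G}) (g : G) : nat :=
  #|[set p : G * G | [&& p.1 \in B, p.2 \in B, p.1 != p.2 & p.1 - p.2 == g]]|.

Definition is_pdf (G : finZmodType) (F : seq {set G}) (ks : seq nat) (lam : nat) : Prop :=
  [/\ size F = size ks,
      forall i, (i < size F)%N -> #|nth set0 F i| = nth 0%N ks i,
      forall i j, (i < j < size F)%N -> [disjoint nth set0 F i & nth set0 F j],
      \bigcup_(B <- F) B = [set: G]
    & forall g : G, g != 0 -> (\sum_(B <- F) dcount B g)%N = lam].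

(* B is a (v, k, mu) difference set in G (v = |G|); parameters as rationals
   so that expressions such as (v-1)/2 can be written literally. *)
Definition is_diff_set (G : finZmodType) (B : {set G}) (k mu : rat) : Prop :=
  (#|B|%:R = k :> rat) /\ forall g : G, g != 0 -> (dcount B g)%:R = mu :> rat.

Definition is_pds (G : finZmodType) (B : {set G}) (k alpha beta : rat) : Prop :=
  [/\ #|B|%:R = k :> rat,
      forall g : G, g != 0 -> g \in B -> (dcount B g)%:R = alpha :> rat
    & forall g : G, g != 0 -> g \notin B -> (dcount B g)%:R = beta :> rat].

(* For g != 0 the number of representations of g as a difference in X is the
   correlation sum_x [x \in X][x - g \in X].  Since B_2 is the complement of
   {0} u B_1, expanding the correlation of that complement gives, with X = B_1,
     lam + 2|X| + 2 = v + 2 dcount X g + [g \in X] + [-g \in X],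
   and symmetrically for B_2.  So v - lam is odd iff exactly one of g, -g lies
   in X for each g != 0; then |X| = (v - 1)/2, dcount X g = lam/2 is constant,
   and counting all differences of X forces lam = |X| - 1.  If v - lam is even
   then X = -X and the identity gives dcount X g = alpha + [g \notin X]. *)

From HB Require Import structures.
From mathcomp Require Import all_boot all_order all_algebra.
From mathcomp Require Import ring lra zify.

Set Implicit Arguments.
Unset Strict Implicit.
Unset Printing Implicit Defensive.

Import Order.TTheory GRing.Theory Num.Theory.
Local Open Scope ring_scope.

Section Correlation.
Variable G : finZmodType.

Definition indicator (A : {set G}) (x : G) : rat := (x \in A)%:R.

Definition corr (A B : {set G}) (g : G) : rat :=
  \sum_x indicator A x * indicator B (x - g).

Lemma sum_indicator (A : {set G}) : \sum_x indicator A x = #|A|%:R.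
Proof.
rewrite -sum1_card natr_sum [RHS]big_mkcond; apply: eq_bigr => x _.
by rewrite /indicator; case: (x \in A).
Qed.

Lemma sum_translate (R : nmodType) (F : G -> R) (g : G) :
  \sum_x F (x - g) = \sum_x F x.
Proof. by rewrite [RHS](reindex_inj (addIr (- g))). Qed.

Lemma sum_delta (R : pzSemiRingType) (F : G -> R) (c : G) :
  \sum_x (x == c)%:R * F x = F c.
Proof.
rewrite (bigD1 c) //= eqxx mul1r big1 ?addr0 // => x /negbTE->.
by rewrite mul0r.
Qed.

Lemma dcount_corr (A : {set G}) (g : G) :
  g != 0 -> (dcount A g)%:R = corr A A g.
Proof.
move=> g0.
have -> : dcount A g = #|[set x in A | x - g \in A]|.
  rewrite /dcount -(card_imset _ (f := fun x => (x, x - g))) => [|x y [] //].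
  apply: eq_card => -[x y]; rewrite inE /=; apply/idP/imsetP => [|[z]].
    case/and4P=> xA yA _ /eqP <-; exists x; rewrite ?inE opprB addrC subrK //.
    by rewrite xA.
  rewrite inE => /andP[zA zgA] [-> ->].
  by rewrite zA zgA subKr -subr_eq0 subKr g0 eqxx.
rewrite -sum1_card natr_sum big_mkcond; apply: eq_bigr => x _.
by rewrite /indicator inE; case: (x \in A); case: (x - g \in A).
Qed.

Lemma corr_setC (A : {set G}) (g : G) :
  corr (~: A) (~: A) g = #|G|%:R - 2 * #|A|%:R + corr A A g.
Proof.
have indC x : indicator (~: A) x = 1 - indicator A x.
  by rewrite /indicator inE; case: (x \in A); rewrite ?subrr ?subr0.
rewrite /corr.
under eq_bigr => x _ do rewrite !indC mulrBl !mulrBr !mul1r mulr1.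
rewrite !sumrB sum_translate sum_indicator sumr_const -/(corr A A g).
ring.
Qed.

Lemma corr_setU0 (A : {set G}) (g : G) : 0 \notin A -> g != 0 ->
  corr (0 |: A) (0 |: A) g = corr A A g + indicator A g + indicator A (- g).
Proof.
move=> A0 g0; have indU x : indicator (0 |: A) x = (x == 0)%:R + indicator A x.
  rewrite /indicator !inE; case: eqP => [->|_]; first by rewrite (negbTE A0).
  by rewrite add0r.
rewrite /corr; under eq_bigr => x _ do rewrite !indU subr_eq0 mulrDl !mulrDr.
rewrite !big_split /= !sum_delta eq_sym (negbTE g0) sub0r add0r.
under [X in _ + (X + _) = _]eq_bigr => x _ do rewrite mulrC.
rewrite sum_delta -/(corr A A g); ring.
Qed.

Lemma corr0 (A : {set G}) : corr A A 0 = #|A|%:R.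
Proof.
rewrite /corr -sum_indicator; apply: eq_bigr => x _.
by rewrite subr0 /indicator; case: (x \in A).
Qed.

Lemma sum_corr (A : {set G}) : \sum_g corr A A g = #|A|%:R ^+ 2.
Proof.
rewrite /corr exchange_big /= expr2 -{1}sum_indicator mulr_suml.
apply: eq_bigr => x _; rewrite -mulr_sumr -sum_indicator.
by congr (_ * _); rewrite [RHS](reindex_inj (can_inj (subKr x))).
Qed.

Lemma sum_dcount (A : {set G}) :
  \sum_(g | g != 0) (dcount A g)%:R = #|A|%:R ^+ 2 - #|A|%:R :> rat.
Proof.
rewrite -sum_corr [\sum_g corr A A g](bigD1 0) //= corr0 addrC addrK.
by apply: eq_bigr => g; apply: dcount_corr.
Qed.

Lemma sum_dcount_const (A : {set G}) (mu : rat) :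
  (forall g, g != 0 -> (dcount A g)%:R = mu) ->
  mu * (#|G|%:R - 1) = #|A|%:R ^+ 2 - #|A|%:R.
Proof.
move=> dcountA; rewrite -sum_dcount (eq_bigr _ dcountA) sumr_const.
rewrite -[RHS]mulr_natr.
congr (_ * _); rewrite [in LHS](cardD1 0) inE natrD addrAC subrr add0r.
by congr (_%:R); apply: eq_card => g; rewrite !inE andbT.
Qed.

End Correlation.

Lemma card_skew (G : finZmodType) (X : {set G}) : 0 \notin X ->
  (forall g, g != 0 -> (- g \in X) = (g \notin X)) -> #|X|.*2.+1 = #|G|.
Proof.
move=> X0 skewX; have oppX : -%R @^-1: X = ~: (0 |: X).
  apply/setP => g; rewrite !inE; case: eqVneq => [->|g0]; last exact: skewX.
  by rewrite oppr0 (negbTE X0).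
have := cardsC (0 |: X); rewrite -oppX card_preimset; last exact: oppr_inj.
by rewrite cardsU1 X0 /= add1n addSn addnn.
Qed.

Section PartitionIntoTwoSetsAndZero.
Variables (G : finZmodType) (X Y : {set G}) (lam : nat).
Hypothesis partXY0 : forall x, ((x \in X) + (x \in Y) + (x == 0%R))%N = 1%N.
Hypothesis dcountXY : forall g, g != 0 -> (dcount X g + dcount Y g)%N = lam.

Lemma notin0_partition : 0 \notin X.
Proof. by have := partXY0 0; rewrite eqxx addn1; case: (0 \in X). Qed.

Lemma setC_partition : Y = ~: (0 |: X).
Proof.
apply/setP => x; have := partXY0 x; rewrite !inE.
by case: (x \in X); case: (x \in Y); case: (x == 0).
Qed.

Lemma dcount_balance (g : G) : g != 0 ->
  (lam + #|X|.*2 + 2 = #|G| + (dcount X g).*2 + (g \in X) + (- g \in X))%N.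
Proof.
move=> g0; apply/eqP; rewrite -(eqr_nat rat) -(dcountXY g0).
rewrite !natrD -!muln2 !natrM !dcount_corr // setC_partition corr_setC.
rewrite corr_setU0 ?notin0_partition //.
rewrite cardsU1 notin0_partition /= natrD /indicator; apply/eqP; ring.
Qed.

Lemma odd_balance (g : G) : g != 0 ->
  odd (#|G| + lam) = ((g \in X) != (- g \in X)).
Proof.
move=> g0; have := congr1 odd (dcount_balance g0); rewrite !oddD !odd_double /=.
by case: (odd lam); case: (odd #|G|); case: (g \in X); case: (- g \in X).
Qed.

Lemma diff_set_of_odd : odd (#|G| + lam) ->
  is_diff_set X ((#|G|%:R - 1) / 2) ((#|G|%:R - 3) / 4).
Proof.
move=> oddGlam; have skewX g : g != 0 -> (- g \in X) = (g \notin X).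
  move=> g0; have := odd_balance g0; rewrite oddGlam.
  by case: (g \in X); case: (- g \in X).
have cardX : (#|X|.*2.+1 = #|G|)%N := card_skew notin0_partition skewX.
have cardG : #|G|%:R = 2 * #|X|%:R + 1 :> rat.
  by rewrite -cardX -addn1 -muln2 natrD natrM mulrC.
split=> [|g g0]; first lra.
have dcountX h : h != 0 -> (dcount X h)%:R = lam%:R / 2 :> rat.
  move=> h0; have := dcount_balance h0; rewrite skewX // -cardX => balance.
  have -> : lam = (dcount X h).*2 by move: balance; case: (h \in X) => /=; lia.
  by rewrite -muln2 natrM; field.
have X_gt0 : (0 < #|X|)%N.
  apply/card_gt0P; case gX: (g \in X); first by exists g.
  by exists (- g); rewrite skewX // gX.
have := sum_dcount_const dcountX; rewrite dcountX // cardG => sum_identity.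
have lamE : lam%:R = #|X|%:R - 1 :> rat.
  apply: (mulIf (lt0r_neq0 _ : #|X|%:R != 0)); first by rewrite ltr0n.
  by rewrite mulrBl mul1r -expr2 -sum_identity; field.
by rewrite lamE; field.
Qed.

Lemma pds_of_even : ~~ odd (#|G| + lam) ->
  let alpha : rat := #|X|%:R + (lam%:R - #|G|%:R) / 2 in
  is_pds X #|X|%:R alpha (alpha + 1).
Proof.
move=> evenGlam alpha.
have balance g : g != 0 -> lam%:R + #|X|%:R * 2 + 2 =
    #|G|%:R + (dcount X g)%:R * 2 + (g \in X)%:R * 2 :> rat.
  move=> g0; have := odd_balance g0; rewrite (negbTE evenGlam).
  move=> /esym/negbFE/eqP symX; have := dcount_balance g0; rewrite -symX.
  by move/(congr1 (GRing.natmul (1 : rat))); rewrite !natrD -!muln2 !natrM; lra.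
split=> // g g0 gX; have := balance g g0;
  by rewrite /alpha ?gX ?(negbTE gX) /=; lra.
Qed.

End PartitionIntoTwoSetsAndZero.

Lemma dcount_set1 (G : finZmodType) (a g : G) : dcount [set a] g = 0%N.
Proof.
apply/eqP; rewrite cards_eq0; apply/eqP/setP => -[x y]; rewrite !inE /=.
by case: eqP => // ->; case: eqP => // ->; rewrite eqxx.
Qed.

Lemma pdf_partition (G : finZmodType) (B1 B2 : {set G}) (ks : seq nat)
    (lam : nat) :
  is_pdf [:: B1; B2; [set 0]] ks lam ->
  (forall x, ((x \in B1) + (x \in B2) + (x == 0%R))%N = 1%N) /\
  (forall g, g != 0 -> (dcount B1 g + dcount B2 g)%N = lam).
Proof.
case=> _ _ disjB coverB dcountB; split=> [x | g g0]; last first.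
  by rewrite -(dcountB g g0) !big_cons big_nil dcount_set1 !addn0.
have /pred0P d12 := disjB 0%N 1%N isT; have /pred0P d13 := disjB 0%N 2%N isT.
have /pred0P d23 := disjB 1%N 2%N isT.
have : x \in \bigcup_(B <- [:: B1; B2; [set 0]]) B by rewrite coverB inE.
rewrite !big_cons big_nil !inE; move: (d12 x) (d13 x) (d23 x); rewrite /= !inE.
by case: (x \in B1); case: (x \in B2); case: (x == 0).
Qed.

Lemma odd_distn (m n : nat) : odd `|m%:Z - n%:Z|%N = odd (m + n).
Proof.
case: (leqP n m) => [le_nm | /ltnW le_mn].
  by rewrite distnEl // oddB // oddD.
by rewrite distnEr // oddB // oddD addbC.
Qed.

Theorem proposition4p2 (G : finZmodType) (B1 B2 : {set G}) (k1 k2 lam : nat) :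
  is_pdf [:: B1; B2; [set 0 : G]] [:: k1; k2; 1%N] lam ->
  forall (B : {set G}) (k : nat), (B, k) \in [:: (B1, k1); (B2, k2)] ->
    (odd `|(#|G|%:Z - lam%:Z)|%N ->
       is_diff_set B ((#|G|%:R - 1) / 2) ((#|G|%:R - 3) / 4)) /\
    (~~ odd `|(#|G|%:Z - lam%:Z)|%N ->
       let alpha : rat := k%:R + (lam%:R - #|G|%:R) / 2 in
       is_pds B k%:R alpha (alpha + 1)).
Proof.
move=> pdfB B k; have [partB dcountB] := pdf_partition pdfB.
case: pdfB => _ cardB _ _ _; rewrite !inE odd_distn => /orP[] /eqP[-> ->].
  rewrite -[k1](cardB 0%N isT).
  split; [exact: (diff_set_of_odd partB dcountB) |
          exact: (pds_of_even partB dcountB)].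
have partB' x : ((x \in B2) + (x \in B1) + (x == 0%R))%N = 1%N.
  by rewrite (addnC (x \in B2)).
have dcountB' g : g != 0 -> (dcount B2 g + dcount B1 g)%N = lam.
  by rewrite addnC; apply: dcountB.
rewrite -[k2](cardB 1%N isT).
split; [exact: (diff_set_of_odd partB' dcountB') |
        exact: (pds_of_even partB' dcountB')].
Qed.
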